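(* Let $s$ be a stream over $\Sigma$ with hidden PFSA generator $G_s$, let $W$ be the zero model (flat white noise generator), and let $\epsilon>0$. With $\ell=\ln(1/\epsilon)/\ln|\Sigma|$, $$\lim_{|s|\to\infty}|\Theta(G_s,W)-\hat{\zeta}(s,\ell)|\le\epsilon.$$
   Context: $\Sigma=\{\sigma_1,\dots,\sigma_{|\Sigma|}\}$ is finite, $\Sigma^\star$ the finite strings, $|x|$ the length of $x$. For a string $s$, $\#^s(y)$ is the overlapping count of $y$ in $s$; symbolic derivative $\phi^s(x)|_i=\#^s(x\sigma_i)/\sum_j\#^s(x\sigma_j)$; $\mathcal{U}_\Sigma$ is the uniform distribution on $\Sigma$. $W$ is the single-state PFSA emitting each symbol i.i.d. with probability $1/|\Sigma|$. $\Theta(G_1,G_2)=\frac{|\Sigma|-1}{|\Sigma|}\lim_{|s_1|,|s_2|\to\infty}\sum_{x\in\Sigma^\star}\|\phi^{s_1}(x)-\phi^{s_2}(x)\|_\infty/|\Sigma|^{2|x|}$ for $s_i$ generated by $G_i$. The partial white noise deviation estimator is $\hat{\zeta}(s,\ell)=\frac{|\Sigma|-1}{|\Sigma|}\sum_{x\in\Sigma^\star,\,|x|\le\ell}\frac{1}{|\Sigma|^{2|x|}}\|\phi^s(x)-\mathcal{U}_\Sigma\|_\infty$, i.e. the sum restricted to strings of length at most $\ell$. *)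

From HB Require Import structures.
From mathcomp Require Import all_boot all_order all_algebra.
From mathcomp Require Import all_classical all_reals all_analysis.
Set Implicit Arguments. Unset Strict Implicit. Unset Printing Implicit Defensive.
Import Order.TTheory GRing.Theory Num.Theory.
Import numFieldNormedType.Exports.
Local Open Scope ring_scope.

Definition occ (T : eqType) (s y : seq T) : nat :=
  (\sum_(i < size s) (take (size y) (drop i s) == y))%N.

(* symbolic derivative phi^s(x), a function Sigma -> R;
   phi^s(x)|_a = #^s(x a) / sum_b #^s(x b)  (x/0 = 0 by MathComp convention) *)
Definition symder (R : realType) (T : finType) (s x : seq T) (a : T) : R :=
  (occ s (rcons x a))%:R / (\sum_(b : T) (occ s (rcons x b))%:R).

Definition supdist (R : realType) (T : finType) (f g : T -> R) : R :=
  \big[Num.max/0]_(a : T) `|f a - g a|.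

Definition unif (R : realType) (T : finType) : T -> R := fun _ => (#|T|%:R)^-1.

Definition level_term (R : realType) (T : finType) (F : seq T -> R) (k : nat) : R :=
  \sum_(x : k.-tuple T) F (tval x) / (#|T|%:R) ^+ (2 * k).

(* The (pre-limit) sum defining Theta, for two finite strings a b:
   (|S|-1)/|S| * sum_{x in S^*} ||phi^a(x) - phi^b(x)||_inf / |S|^(2|x|),
   the infinite sum over S^* taken as the limit of partial sums by length. *)
Definition Theta_sum (R : realType) (T : finType) (a b : seq T) : R :=
  ((#|T|%:R - 1) / #|T|%:R) *
  limn (fun n => \sum_(k < n)
          level_term (fun x => supdist (@symder R T a x) (@symder R T b x)) k).

Definition zeta_hat (R : realType) (T : finType) (s : seq T) (l : R) : R :=
  ((#|T|%:R - 1) / #|T|%:R) *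
  \sum_(k < (Num.truncn l).+1 | (k%:R <= l))
     level_term (fun x => supdist (@symder R T s x) (@unif R T)) k.

Definition stream_prefix (T : Type) (s : nat -> T) (n : nat) : seq T := mkseq s n.

(* Dropping from the series defining Theta all strings longer than l costs
   at most eps: level k contributes at most |Sigma|^-k, so the dropped tail is
   at most ((|Sigma| - 1) / |Sigma|) * |Sigma|^-K / (1 - 1/|Sigma|) = |Sigma|^-K
   for the first dropped level K > l, and |Sigma|^-l = eps.  On the finitely
   many remaining levels, replacing the derivatives of the white-noise sample
   by the uniform distribution moves the truncated sum by at most the truncated
   deviation of that sample from white noise, which tends to 0; and the
   truncated deviation of s converges because it depends continuously on
   finitely many converging symbolic derivatives. *)

From HB Require Import structures.
From mathcomp Require Import all_boot all_order all_algebra.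
From mathcomp Require Import all_classical all_reals all_analysis.
From mathcomp Require Import ring lra.
Import Order.TTheory GRing.Theory Num.Theory.
Import numFieldNormedType.Exports.
Set Implicit Arguments. Unset Strict Implicit. Unset Printing Implicit Defensive.
Local Open Scope classical_set_scope.
Local Open Scope ring_scope.

Section SupDistance.
Variables (R : realType) (T : finType).
Implicit Types f g u : T -> R.

Lemma supdist_ge0 f g : 0 <= supdist f g.
Proof. exact: bigmax_ge_id. Qed.

Lemma supdistC f g : supdist f g = supdist g f.
Proof. by apply: eq_bigr => a _; rewrite distrC. Qed.

Lemma supdist_le f g M : 0 <= M -> (forall a, `|f a - g a| <= M) ->
  supdist f g <= M.
Proof. by move=> M0 fgM; apply: bigmax_le. Qed.

Lemma supdistxx f : supdist f f = 0.
Proof.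
apply/eqP; rewrite eq_le supdist_ge0 andbT.
by apply: supdist_le => // a; rewrite subrr normr0.
Qed.

Lemma le_supdist f g a : `|f a - g a| <= supdist f g.
Proof. exact: le_bigmax. Qed.

Lemma supdist_triangle f g u : supdist f g <= supdist f u + supdist u g.
Proof.
apply: supdist_le => [|a]; first by rewrite addr_ge0 ?supdist_ge0.
by rewrite (le_trans (ler_distD (u a) _ _)) // lerD ?le_supdist.
Qed.

Lemma supdist_distB f g u : `|supdist f g - supdist f u| <= supdist g u.
Proof.
have := supdist_triangle f u g; have := supdist_triangle f g u.
rewrite (supdistC u g) ler_norml; lra.
Qed.

Lemma supdist_le1 f g : (forall a, 0 <= f a <= 1) -> (forall a, 0 <= g a <= 1) ->
  supdist f g <= 1.
Proof.
move=> f01 g01; apply: supdist_le => // a.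
move: (f01 a) (g01 a) => /andP[? ?] /andP[? ?].
by rewrite ler_norml; apply/andP; split; lra.
Qed.

Lemma cvg_supdist (f_ : nat -> T -> R) f g :
  (forall a, f_ n a @[n --> \oo] --> f a) ->
  supdist (f_ n) g @[n --> \oo] --> supdist f g.
Proof.
move=> f_f; apply: cvg_big => [|a _]; first exact: max_continuous.
by apply: cvg_norm; apply: cvgB => //; exact: cvg_cst.
Qed.

End SupDistance.

Section SymbolicDerivative.
Variables (R : realType) (T : finType).
Implicit Types s x : seq T.

Lemma symder_ge0 s x a : 0 <= @symder R T s x a.
Proof. by rewrite divr_ge0 // sumr_ge0. Qed.

Lemma symder_le1 s x a : @symder R T s x a <= 1.
Proof.
rewrite /symder; set D := \sum_b _.
have [->|D0] := eqVneq D 0; first by rewrite invr0 mulr0.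
rewrite ler_pdivrMr ?lt_def ?D0 ?sumr_ge0 // mul1r /D (bigD1 a) //=.
by rewrite lerDl sumr_ge0.
Qed.

End SymbolicDerivative.

Section LevelTerm.
Variables (R : realType) (T : finType).
Implicit Types F G H : seq T -> R.

Lemma level_term_ge0 F k : (forall x, 0 <= F x) -> 0 <= level_term F k.
Proof. by move=> F0; apply: sumr_ge0 => x _; rewrite divr_ge0 ?exprn_ge0. Qed.

Lemma level_term_le_geometric F k : (0 < #|T|)%N -> (forall x, F x <= 1) ->
  level_term F k <= (#|T|%:R^-1) ^+ k.
Proof.
move=> T0 F1; set q : R := #|T|%:R; have q0 : q != 0 by rewrite pnatr_eq0 -lt0n.
apply: le_trans (_ : \sum_(x : k.-tuple T) 1 / q ^+ (2 * k) <= _).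
  by apply: ler_sum => x _; rewrite ler_wpM2r ?invr_ge0 ?exprn_ge0.
rewrite sumr_const card_tuple -mulr_natr natrX mul2n -addnn exprD exprVn.
by rewrite mul1r invfM -/q divfK ?expf_neq0.
Qed.

Lemma level_term_distB F G H k : (forall x, `|F x - G x| <= H x) ->
  `|level_term F k - level_term G k| <= level_term H k.
Proof.
move=> FGH; rewrite /level_term -sumrB (le_trans (ler_norm_sum _ _ _)) //.
apply: ler_sum => x _.
rewrite -mulrBl normrM [`|_^-1|]ger0_norm ?invr_ge0 ?exprn_ge0 //.
by rewrite ler_wpM2r ?invr_ge0 ?exprn_ge0.
Qed.

Lemma cvg_level_term (F_ : nat -> seq T -> R) F k :
  (forall x, F_ n x @[n --> \oo] --> F x) ->
  level_term (F_ n) k @[n --> \oo] --> level_term F k.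
Proof.
move=> F_F; apply: cvg_big => [|x _]; first exact: add_continuous.
exact: cvgMr_tmp.
Qed.

End LevelTerm.

Lemma series_tail_le_geometric {R : realType} {r : R} {t : R ^nat} (K : nat) :
  0 < r < 1 -> (forall k, 0 <= t k <= r ^+ k) ->
  `|limn (series t) - series t K| <= r ^+ K / (1 - r).
Proof.
move=> /andP[r0 r1] t_geo.
have t0 k : 0 <= t k by case/andP: (t_geo k).
have r_norm : `|r| < 1 by rewrite ger0_norm ?ltW.
have cvg_t : cvgn (series t).
  apply: (@series_le_cvg _ _ (geometric 1 r) t0) => [k|k|].
  - by rewrite geometric_ge0 ?ltW.
  - by rewrite /= mul1r; case/andP: (t_geo k).
  - exact: is_cvg_geometric_series.
have le_lim : series t K <= limn (series t).
  by apply: nondecreasing_cvgn_le cvg_t K; exact: nondecreasing_series.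
have lim_le : limn (series t) <= series t K + r ^+ K / (1 - r).
  apply: limr_le cvg_t _; near=> n.
  have Kn : (K <= n)%N by near: n; exact: nbhs_infty_ge.
  rewrite -lerBlDl sub_series_geq //.
  apply: le_trans (_ : \sum_(K <= k < n) r ^+ k <= _).
    by apply: ler_sum => k _; case/andP: (t_geo k).
  rewrite -(subnKC Kn) geometric_partial_tail.
  exact: geometric_le_lim (exprn_ge0 K (ltW r0)) r0 r_norm.
by rewrite ler_norml; apply/andP; split; lra.
Unshelve. all: by end_near. Qed.

Section Truncation.
Variables (R : realType) (T : finType).
Implicit Types (f g u : seq T -> T -> R).

Definition Theta_trunc f g (K : nat) : R :=
  ((#|T|%:R - 1) / #|T|%:R) *
  \sum_(k < K) level_term (fun x => supdist (f x) (g x)) k.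

Lemma Theta_weight_ge0 : 0 <= (#|T|%:R - 1) / #|T|%:R :> R.
Proof.
have [->|T0] := posnP #|T|; first by rewrite invr0 mulr0.
by rewrite divr_ge0 // subr_ge0 ler1n.
Qed.

Lemma Theta_truncxx f K : Theta_trunc f f K = 0.
Proof.
rewrite /Theta_trunc big1 ?mulr0 // => k _.
by rewrite /level_term big1 // => x _; rewrite supdistxx mul0r.
Qed.

Lemma Theta_trunc_distB f g u K :
  `|Theta_trunc f g K - Theta_trunc f u K| <= Theta_trunc g u K.
Proof.
rewrite -mulrBr normrM ger0_norm ?Theta_weight_ge0 // ler_wpM2l ?Theta_weight_ge0 //.
rewrite -sumrB (le_trans (ler_norm_sum _ _ _)) // ler_sum // => k _.
by apply: level_term_distB => x; exact: supdist_distB.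
Qed.

Lemma cvg_Theta_trunc (f_ : nat -> seq T -> T -> R) f g K :
  (forall x a, f_ n x a @[n --> \oo] --> f x a) ->
  Theta_trunc (f_ n) g K @[n --> \oo] --> Theta_trunc f g K.
Proof.
move=> f_f; apply: cvgMl_tmp; apply: cvg_big => [|k _]; first exact: add_continuous.
by apply: cvg_level_term => x; exact: cvg_supdist.
Qed.

Lemma Theta_sum_trunc s1 s2 (K : nat) : (1 < #|T|)%N ->
  `|Theta_sum R s1 s2 - Theta_trunc (symder R s1) (symder R s2) K|
    <= (#|T|%:R^-1) ^+ K.
Proof.
move=> T1; set q : R := #|T|%:R; have q1 : 1 < q by rewrite ltr1n.
have q0 : 0 < q by exact: lt_trans ltr01 q1.
rewrite /Theta_sum /Theta_trunc -/q; set t := level_term _.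
have t_geo k : 0 <= t k <= q^-1 ^+ k.
  rewrite level_term_ge0 => [|x]; last exact: supdist_ge0.
  rewrite level_term_le_geometric ?(ltn_trans _ T1) // => x.
  by apply: supdist_le1 => a; rewrite symder_ge0 symder_le1.
have series_tE n : \sum_(k < n) t k = series t n by rewrite /series /= big_mkord.
have -> : (fun n => \sum_(k < n) t k) = series t by apply/funext => n.
rewrite series_tE -mulrBr normrM ger0_norm ?Theta_weight_ge0 //.
apply: le_trans (ler_wpM2l Theta_weight_ge0 (series_tail_le_geometric K _ t_geo)) _.
  by rewrite invr_gt0 q0 invf_lt1.
have -> : (q - 1) / q * (q^-1 ^+ K / (1 - q^-1)) = q^-1 ^+ K.
  by field; rewrite subr_eq0 gt_eqF //= gt_eqF.
by [].
Qed.

Lemma Theta_trunc_white_noise_dev theta s1 s2 (K : nat) : (1 < #|T|)%N ->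
  `|theta - Theta_trunc (symder R s1) (fun _ => @unif R T) K| <=
    `|theta - Theta_sum R s1 s2| + #|T|%:R^-1 ^+ K
    + Theta_trunc (symder R s2) (fun _ => @unif R T) K.
Proof.
move=> T1; rewrite (le_trans (ler_distD (Theta_sum R s1 s2) _ _)) //.
rewrite -addrA lerD2l.
rewrite (le_trans (ler_distD (Theta_trunc (symder R s1) (symder R s2) K) _ _)) //.
by rewrite lerD ?Theta_trunc_distB ?Theta_sum_trunc.
Qed.

End Truncation.

Lemma zeta_hat_trunc (R : realType) (T : finType) (l : R) :
  exists2 K : nat, l < K%:R &
    forall s : seq T, zeta_hat s l = Theta_trunc (symder R s) (fun _ => @unif R T) K.
Proof.
have [l0|l0] := leP 0 l.
  exists (Num.truncn l).+1; first exact: truncnS_gt.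
  move=> s; rewrite /zeta_hat; congr (_ * _); apply: eq_bigl => k.
  by rewrite -truncn_ge_nat // -ltnS ltn_ord.
exists 0%N => // s; rewrite /zeta_hat /Theta_trunc big_ord0 big_pred0 ?mulr0 // => k.
by apply/negbTE; rewrite -ltNge (lt_le_trans l0).
Qed.

Lemma expVn_le_of_log_lt (R : realType) (q eps : R) (K : nat) :
  1 < q -> 0 < eps -> ln (1 / eps) / ln q < K%:R -> q^-1 ^+ K <= eps.
Proof.
move=> q1 eps0; have q0 : 0 < q by exact: lt_trans ltr01 q1.
rewrite ltr_pdivrMr ?ln_gt0 // mul1r mulr_natl -lnXn // exprVn.
rewrite -[leRHS]invrK lef_pV2 ?posrE ?invr_gt0 ?exprn_gt0 //.
by move=> /ltW; rewrite ler_ln ?posrE ?invr_gt0 ?exprn_gt0.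
Qed.

Theorem mainTheorem14 (R : realType) (T : finType) (s w : nat -> T)
  (theta eps : R) :
  (1 < #|T|)%N ->
  (forall (x : seq T) (a : T), exists L : R,
      (fun n => @symder R T (stream_prefix s n) x a) @ \oo --> L) ->
  (forall (x : seq T) (a : T),
      (fun n => @symder R T (stream_prefix w n) x a) @ \oo --> ((#|T|%:R)^-1 : R)) ->
  (forall e : R, 0 < e -> exists N : nat, forall n m : nat,
      (N <= n)%N -> (N <= m)%N ->
      `|@Theta_sum R T (stream_prefix s n) (stream_prefix w m) - theta| < e) ->
  0 < eps ->
  let l := ln (1 / eps) / ln (#|T|%:R : R) in
  exists L : R,
    (fun n => `|theta - @zeta_hat R T (stream_prefix s n) l|) @ \oo --> L /\ L <= eps.
Proof.
move=> T1 cvg_s cvg_w cvg_theta eps0 l.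
have [K lK zeta_hatE] := zeta_hat_trunc T l.
have tail_le_eps : #|T|%:R^-1 ^+ K <= eps by apply: expVn_le_of_log_lt; rewrite ?ltr1n.
pose U := fun _ : seq T => @unif R T.
pose S n := symder R (stream_prefix s n); pose W m := symder R (stream_prefix w m).
pose Ls x a := limn (fun n => S n x a).
have S_Ls x a : S n x a @[n --> \oo] --> Ls x a by have [L /cvgP] := cvg_s x a.
have W_U : Theta_trunc (W m) U K @[m --> \oo] --> 0.
  by rewrite -(Theta_truncxx U K); exact: cvg_Theta_trunc.
have cvg_dev : `|theta - Theta_trunc (S n) U K| @[n --> \oo] -->
    `|theta - Theta_trunc Ls U K|.
  by apply: cvg_norm; apply: cvgB; [exact: cvg_cst | exact: cvg_Theta_trunc].
exists `|theta - Theta_trunc Ls U K|; split; first by under eq_cvg do rewrite zeta_hatE.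
apply/ler_addgt0Pr => d d0; have d2 : 0 < d / 2 by rewrite divr_gt0.
have [N theta_near] := cvg_theta _ d2.
have [M _ W_small] := (cvgrPdist_lt _ _).1 W_U _ d2.
apply: (cvgr_to_le cvg_dev); near=> n.
have Nn : (N <= n)%N by near: n; exact: nbhs_infty_ge.
pose m := maxn N M.
apply: le_trans (Theta_trunc_white_noise_dev theta _ (stream_prefix w m) K T1) _.
have theta_close := theta_near n _ Nn (leq_maxl N M); rewrite distrC in theta_close.
have := W_small _ (leq_maxr N M); rewrite sub0r normrN => /ltr_normlW W_close.
lra.
Unshelve. all: by end_near. Qed.
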